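(* (a) For an integer $k\ge2$, with $P_k$, $Z_k$, $\Lambda_k$, $p_j$ as below, every global trajectory $\gamma$ of $Z_k$ with $\gamma(0)\in\Lambda_k$ has the property that for every $t\in\mathbb{R}$ there exists a unique $t^*\in[t,t+1)$ with $\gamma(t^* )\in\{(p_j,0):j=1,\dots,k-1\}$. (b) Every global trajectory $\gamma$ of $Z_\infty$ with $\gamma(0)\in\Lambda_\infty$ has the property that for every $t\in\mathbb{R}$ there exists a unique $t^*\in[t,t+1)$ with $\gamma(t^* )\in\{(j,0):j\in\mathbb{Z}\}$.
   Context: $P_k(x)=-\left(x+\frac{k-1}{2}\right)\left(x-\frac{k-1}{2}\right)\prod_{i=1}^{k-1}\left(x-\left(i-\frac k2\right)\right)^2$, $r_0=\frac{1-k}{2}$, $r_1=\frac{k-1}{2}$, $p_j=j-\frac k2$; $Z_k=(X_k,Y_k)$ with $X_k(x,y)=(1,P_k'(x))$ on $y\ge0$, $Y_k(x,y)=(-1,P_k'(x))$ on $y\le0$; $\Lambda_k=\{(x,\pm P_k(x)):r_0\le x\le r_1\}$. $Z_\infty$: $X_\infty(x,y)=(1,2\sin(2\pi x))$ on $y\ge0$, $Y_\infty(x,y)=(-1,2\sin(2\pi x))$ on $y\le0$; $\Lambda_\infty=\{(x,\pm P_\infty(x)):x\in\mathbb{R}\}$ with $P_\infty(x)=\frac{1-\cos(2\pi x)}{\pi}$. PSVF conventions: switching manifold $\Sigma=\{y=0\}=f^{-1}(0)$, $f(x,y)=y$; $Wf=\langle\nabla f,W\rangle$, $W^2f=\langle\nabla(Wf),W\rangle$;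 crossing region $\Sigma^c=\{Xf\cdot Yf>0\}$ ($\Sigma^{c\pm}$ according to the common sign), sliding $\Sigma^s=\{Xf<0<Yf\}$, escaping $\Sigma^e=\{Yf<0<Xf\}$, sliding field $Z^T=(Yf\,X-Xf\,Y)/(Yf-Xf)$. Local trajectories (Filippov): off $\Sigma$ follow $X$ or $Y$; through $\Sigma^{c+}$ follow $Y$ for $t\le0$ and $X$ for $t\ge0$ (reversed on $\Sigma^{c-}$); on $\Sigma^e$ follow $Z^T$ for $t\le0$ and one of $X,Y,Z^T$ for $t\ge0$ (reversed on $\Sigma^s$); at a regular tangency (not invisible for both fields) follow one of $X,Y,Z^T$ for $t\le0$ and one for $t\ge0$; singular tangencies are stationary. A global trajectory $\gamma:\mathbb{R}\to\mathbb{R}^2$ is a concatenation of orientation-preserving local trajectories $\sigma_i$ on $[t_i,t_{i+1}]$, $i\in\mathbb{Z}$, with $\sigma_i(t_{i+1})=\sigma_{i+1}(t_{i+1})$, $t_i\to\pm\infty$. *)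

From Stdlib Require Import Reals ZArith.
From Coquelicot Require Import Coquelicot.
Open Scope R_scope.

Definition pt := (R * R)%type.

(** W f = <grad f, W> = second component of W, since grad f = (0,1). *)
Definition Wf (W : pt -> pt) (p : pt) : R := snd (W p).

Definition W2f (W : pt -> pt) (p : pt) : R :=
  Derive (fun s => Wf W (s, snd p)) (fst p) * fst (W p)
  + Derive (fun s => Wf W (fst p, s)) (snd p) * snd (W p).

Definition onSigma (p : pt) : Prop := snd p = 0.

Section Regions.
Variables X Y : pt -> pt.

Definition crossing_plus (p : pt) : Prop := onSigma p /\ Wf X p > 0 /\ Wf Y p > 0.
Definition crossing_minus (p : pt) : Prop := onSigma p /\ Wf X p < 0 /\ Wf Y p < 0.
Definition sliding (p : pt) : Prop := onSigma p /\ Wf X p < 0 < Wf Y p.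
Definition escaping (p : pt) : Prop := onSigma p /\ Wf Y p < 0 < Wf X p.
Definition tangency (p : pt) : Prop := onSigma p /\ Wf X p * Wf Y p = 0.

(** Invisible fold: X lives on y >= 0, Y on y <= 0. *)
Definition invisible_X (p : pt) : Prop := Wf X p = 0 /\ W2f X p < 0.
Definition invisible_Y (p : pt) : Prop := Wf Y p = 0 /\ W2f Y p > 0.

Definition regular_tangency (p : pt) : Prop :=
  tangency p /\ ~ (invisible_X p /\ invisible_Y p).
Definition singular_tangency (p : pt) : Prop :=
  tangency p /\ invisible_X p /\ invisible_Y p.

Definition ZT (p : pt) : pt :=
  ((Wf Y p * fst (X p) - Wf X p * fst (Y p)) / (Wf Y p - Wf X p),
   (Wf Y p * snd (X p) - Wf X p * snd (Y p)) / (Wf Y p - Wf X p)).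

Definition solves (W : pt -> pt) (phi : R -> pt) (u v : R) : Prop :=
  (forall t, u <= t <= v -> forall eps, 0 < eps -> exists delta, 0 < delta /\
     forall s, u <= s <= v -> Rabs (s - t) < delta ->
       Rabs (fst (phi s) - fst (phi t)) < eps /\ Rabs (snd (phi s) - snd (phi t)) < eps) /\
  (forall t, u < t < v ->
     is_derive (fun s => fst (phi s)) t (fst (W (phi t))) /\
     is_derive (fun s => snd (phi s)) t (snd (W (phi t)))).

Definition follow_X (phi : R -> pt) (u v : R) : Prop :=
  solves X phi u v /\ (forall t, u < t < v -> snd (phi t) > 0).
Definition follow_Y (phi : R -> pt) (u v : R) : Prop :=
  solves Y phi u v /\ (forall t, u < t < v -> snd (phi t) < 0).
Definition follow_ZT (phi : R -> pt) (u v : R) : Prop :=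
  solves ZT phi u v /\ (forall t, u <= t <= v -> onSigma (phi t)) /\
  (forall t, u < t < v -> sliding (phi t) \/ escaping (phi t)).
Definition follow_any (phi : R -> pt) (u v : R) : Prop :=
  follow_X phi u v \/ follow_Y phi u v \/ follow_ZT phi u v.

Definition local_traj (phi : R -> pt) (a b : R) : Prop :=
  a <= 0 <= b /\
  (snd (phi 0) > 0 -> follow_X phi a b) /\
  (snd (phi 0) < 0 -> follow_Y phi a b) /\
  (crossing_plus (phi 0) -> follow_Y phi a 0 /\ follow_X phi 0 b) /\
  (crossing_minus (phi 0) -> follow_X phi a 0 /\ follow_Y phi 0 b) /\
  (escaping (phi 0) -> follow_ZT phi a 0 /\ follow_any phi 0 b) /\
  (sliding (phi 0) -> follow_any phi a 0 /\ follow_ZT phi 0 b) /\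
  (regular_tangency (phi 0) -> follow_any phi a 0 /\ follow_any phi 0 b) /\
  (singular_tangency (phi 0) -> forall t, a <= t <= b -> phi t = phi 0).

(** Global trajectory: concatenation of orientation-preserving (time-shifted) local
    trajectories on [tau i, tau (i+1)], i in Z, with tau i -> +-oo. *)
Definition global_traj (gamma : R -> pt) : Prop :=
  exists tau : Z -> R,
    (forall i, tau i < tau (i + 1)%Z) /\
    (forall M, exists i, M < tau i) /\
    (forall M, exists i, tau i < M) /\
    (forall i, exists c, tau i <= c <= tau (i + 1)%Z /\
        local_traj (fun s => gamma (s + c)) (tau i - c) (tau (i + 1)%Z - c)).

End Regions.

Fixpoint prodsq (k n : nat) (x : R) : R :=
  match n with
  | O => 1
  | S m => prodsq k m x * (x - (INR (S m) - INR k / 2)) ^ 2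
  end.

Definition r0 (k : nat) : R := (1 - INR k) / 2.
Definition r1 (k : nat) : R := (INR k - 1) / 2.
Definition pj (k j : nat) : R := INR j - INR k / 2.

Definition Pk (k : nat) (x : R) : R :=
  - ((x + (INR k - 1) / 2) * (x - (INR k - 1) / 2)) * prodsq k (k - 1) x.

Definition Xk (k : nat) (p : pt) : pt := (1, Derive (Pk k) (fst p)).
Definition Yk (k : nat) (p : pt) : pt := (-1, Derive (Pk k) (fst p)).

Definition Lambdak (k : nat) (p : pt) : Prop :=
  exists x, r0 k <= x <= r1 k /\ (p = (x, Pk k x) \/ p = (x, - Pk k x)).

Definition Xinf (p : pt) : pt := (1, 2 * sin (2 * PI * fst p)).
Definition Yinf (p : pt) : pt := (-1, 2 * sin (2 * PI * fst p)).
Definition Pinf (x : R) : R := (1 - cos (2 * PI * x)) / PI.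
Definition Lambdainf (p : pt) : Prop :=
  exists x, p = (x, Pinf x) \/ p = (x, - Pinf x).

From Stdlib Require Import Reals ZArith Lra Lia Classical.
From Coquelicot Require Import Coquelicot.
Open Scope R_scope.

(* Both fields are (+-1, P'(x)), with P = P_k, s0 = k/2 or P = P_inf, s0 = 0.
   As Xf = Yf on the switching line there is no sliding, and every arc off
   that line is a translate of the graph of e P (e = +-1) run with dx/dt = e.
   A trajectory starting on the graph of +-P therefore stays on it: along the
   branch y = e P(x) the phase e (x + s0) - t is constant, and at a zero of P,
   where the trajectory may switch branch, 2 (x + s0) is an integer, so the
   phase is still constant modulo 1.  Since P >= 0 on one side of each of its
   zeros, P'' >= 0 there and no singular tangency is met.  The grid points
   (x, 0) with x + s0 in Z are then hit exactly at the times of one residue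
   class modulo 1. *)

Definition is_int (z : R) : Prop := exists n : Z, z = IZR n.

Lemma is_int_add a b : is_int a -> is_int b -> is_int (a + b).
Proof. intros [n ->] [m ->]. exists (n + m)%Z. now rewrite plus_IZR. Qed.

Lemma is_int_opp a : is_int a -> is_int (- a).
Proof. intros [n ->]. exists (- n)%Z. now rewrite opp_IZR. Qed.

Lemma is_int_sub a b : is_int a -> is_int b -> is_int (a - b).
Proof. intros Ha Hb. apply is_int_add; auto using is_int_opp. Qed.

Lemma is_int_sign_mul e a : e = 1 \/ e = -1 -> is_int a -> is_int (e * a).
Proof.
  intros [-> | ->] Ha.
  - now rewrite Rmult_1_l.
  - replace (-1 * a) with (- a) by ring. now apply is_int_opp.
Qed.

Lemma is_int_INR n : is_int (INR n).
Proof. exists (Z.of_nat n). apply INR_IZR_INZ. Qed.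

Lemma unique_shifted_int t a : exists! ts, t <= ts < t + 1 /\ is_int (ts + a).
Proof.
  destruct (archimed (- (t + a))) as [Hup1 Hup2].
  exists (IZR (1 - up (- (t + a))) - a). rewrite minus_IZR in *. split.
  - split; [lra|]. exists (1 - up (- (t + a)))%Z. rewrite minus_IZR. ring.
  - intros ts [Hts [n Hn]].
    assert (Hnm : (n - (1 - up (- (t + a))))%Z = 0%Z).
    { apply one_IZR_lt1. rewrite !minus_IZR. lra. }
    assert (n = (1 - up (- (t + a)))%Z) as -> by lia.
    rewrite minus_IZR in Hn. lra.
Qed.

Definition cont_within (f : R -> R) (u v t : R) : Prop :=
  forall eps, 0 < eps -> exists delta, 0 < delta /\
    forall s, u <= s <= v -> Rabs (s - t) < delta -> Rabs (f s - f t) < eps.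

Lemma is_derive_continuity (f : R -> R) x l : is_derive f x l -> continuity_pt f x.
Proof. intros H. apply derivable_continuous_pt. exists l. now apply is_derive_Reals. Qed.

Lemma cont_within_continuity (f : R -> R) u v t : continuity_pt f t -> cont_within f u v t.
Proof.
  intros Hc eps Heps. destruct (Hc eps Heps) as [d [Hd Hf]].
  exists d. split; [exact Hd|]. intros s _ Hst.
  destruct (Req_dec s t) as [-> | Hne].
  - rewrite Rminus_diag, Rabs_R0. exact Heps.
  - apply (Hf s). repeat split; auto.
Qed.

Lemma cont_within_minus (f g : R -> R) u v t :
  cont_within f u v t -> cont_within g u v t -> cont_within (fun s => f s - g s) u v t.
Proof.
  intros Hf Hg eps Heps.
  destruct (Hf (eps / 2)) as [d1 [Hd1 H1]]; [lra|].
  destruct (Hg (eps / 2)) as [d2 [Hd2 H2]]; [lra|].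
  exists (Rmin d1 d2). split; [now apply Rmin_glb_lt|]. intros s Hs Hst.
  specialize (H1 s Hs (Rlt_le_trans _ _ _ Hst (Rmin_l _ _))).
  specialize (H2 s Hs (Rlt_le_trans _ _ _ Hst (Rmin_r _ _))).
  replace (f s - g s - (f t - g t)) with ((f s - f t) + - (g s - g t)) by ring.
  eapply Rle_lt_trans; [apply Rabs_triang|]. rewrite Rabs_Ropp. lra.
Qed.

Lemma cont_within_scal k (f : R -> R) u v t :
  cont_within f u v t -> cont_within (fun s => k * f s) u v t.
Proof.
  intros Hf eps Heps.
  assert (Hk : 0 < Rabs k + 1) by (pose proof (Rabs_pos k); lra).
  destruct (Hf (eps / (Rabs k + 1))) as [d [Hd H]]; [now apply Rdiv_lt_0_compat|].
  exists d. split; [exact Hd|]. intros s Hs Hst.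
  rewrite <- Rmult_minus_distr_l, Rabs_mult.
  apply Rle_lt_trans with ((Rabs k + 1) * Rabs (f s - f t)).
  - apply Rmult_le_compat_r; [apply Rabs_pos | lra].
  - replace eps with ((Rabs k + 1) * (eps / (Rabs k + 1))) by (field; lra).
    apply Rmult_lt_compat_l; auto.
Qed.

Lemma cont_within_approx (f : R -> R) u v t0 : u < v -> u <= t0 <= v -> cont_within f u v t0 ->
  forall eps, 0 < eps -> exists t, u < t < v /\ Rabs (f t - f t0) < eps.
Proof.
  intros Huv Ht0 Hf eps Heps. destruct (Hf eps Heps) as [d [Hd H]].
  destruct (Rlt_or_le t0 v) as [Hlt | Hle].
  - set (h := Rmin d (v - t0) / 2).
    assert (0 < Rmin d (v - t0)) by (apply Rmin_glb_lt; lra).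
    pose proof (Rmin_l d (v - t0)). pose proof (Rmin_r d (v - t0)).
    exists (t0 + h). split; [unfold h; lra|]. apply H; [unfold h; lra|].
    rewrite Rabs_right; unfold h; lra.
  - set (h := Rmin d (v - u) / 2).
    assert (0 < Rmin d (v - u)) by (apply Rmin_glb_lt; lra).
    pose proof (Rmin_l d (v - u)). pose proof (Rmin_r d (v - u)).
    exists (t0 - h). split; [unfold h; lra|]. apply H; [unfold h; lra|].
    rewrite Rabs_left; unfold h; lra.
Qed.

Lemma cont_within_interior_eq (f : R -> R) c u v t0 :
  u < v -> u <= t0 <= v -> cont_within f u v t0 ->
  (forall t, u < t < v -> f t = c) -> f t0 = c.
Proof.
  intros Huv Ht0 Hf Hc. apply NNPP. intros Hne.
  assert (Hpos : 0 < Rabs (f t0 - c)) by (apply Rabs_pos_lt; lra).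
  destruct (cont_within_approx f u v t0 Huv Ht0 Hf _ Hpos) as [t [Ht Happrox]].
  rewrite Hc, Rabs_minus_sym in Happrox by exact Ht. lra.
Qed.

Lemma cont_within_interior_pos (f : R -> R) u v t0 :
  u < v -> u <= t0 <= v -> cont_within f u v t0 ->
  (forall t, u < t < v -> 0 < f t) -> 0 <= f t0.
Proof.
  intros Huv Ht0 Hf Hpos. apply Rnot_lt_le. intros Hneg.
  destruct (cont_within_approx f u v t0 Huv Ht0 Hf (- f t0)) as [t [Ht Happrox]]; [lra|].
  apply Rabs_def2 in Happrox. specialize (Hpos t Ht). lra.
Qed.

Lemma derive0_const_interior (h : R -> R) u v : (forall t, u < t < v -> is_derive h t 0) ->
  forall t1 t2, u < t1 -> t1 <= t2 -> t2 < v -> h t1 = h t2.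
Proof.
  intros Hd t1 t2 H1 H12 H2. destruct (Req_dec t1 t2) as [-> | Hne]; [reflexivity|].
  destruct (MVT_cor2 h (fun _ => 0) t1 t2) as [c [Heq _]]; [lra| |lra].
  intros c Hc. apply is_derive_Reals, Hd. lra.
Qed.

Lemma derive0_const (h : R -> R) u v : (forall t, u <= t <= v -> cont_within h u v t) ->
  (forall t, u < t < v -> is_derive h t 0) -> forall t, u <= t <= v -> h t = h u.
Proof.
  intros Hc Hd t Ht. destruct (Req_dec u v) as [<- | Hne]; [f_equal; lra|].
  set (m := (u + v) / 2).
  assert (Hint : forall s, u < s < v -> h s = h m).
  { intros s Hs. destruct (Rle_or_lt s m).
    - apply (derive0_const_interior h u v Hd); unfold m in *; lra.
    - symmetry. apply (derive0_const_interior h u v Hd); unfold m in *; lra. }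
  assert (Huv : u < v) by lra.
  rewrite (cont_within_interior_eq h (h m) u v t), (cont_within_interior_eq h (h m) u v u);
    auto; try apply Hc; lra.
Qed.

Lemma derivative_sign_change (f1 : R -> R) x0 D : is_derive f1 x0 D -> f1 x0 = 0 -> D < 0 ->
  exists eta, 0 < eta /\ forall h, h <> 0 -> Rabs h < eta -> f1 (x0 + h) * h < 0.
Proof.
  intros Hd H0 HD. apply is_derive_Reals in Hd.
  destruct (Hd (- D / 2)) as [eta Heta]; [lra|].
  exists eta. split; [apply cond_pos|]. intros h Hh Hha.
  specialize (Heta h Hh Hha). rewrite H0, Rminus_0_r in Heta. apply Rabs_def2 in Heta.
  replace (f1 (x0 + h) * h) with (f1 (x0 + h) / h * (h * h)) by (field; exact Hh).
  assert (0 < h * h) by (apply Rsqr_pos_lt; exact Hh).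
  nra.
Qed.

Lemma strict_local_max (f f1 : R -> R) x0 D : (forall y, is_derive f y (f1 y)) ->
  is_derive f1 x0 D -> f1 x0 = 0 -> D < 0 ->
  exists eta, 0 < eta /\ forall h, h <> 0 -> Rabs h < eta -> f (x0 + h) < f x0.
Proof.
  intros Hf Hd H0 HD. destruct (derivative_sign_change f1 x0 D Hd H0 HD) as [eta [Heta Hsg]].
  exists eta. split; [exact Heta|]. intros h Hh Hha.
  assert (Hmvt : forall a b, a < b -> exists c, f b - f a = f1 c * (b - a) /\ a < c < b).
  { intros a b Hab. apply MVT_cor2; [exact Hab|]. intros c _. apply is_derive_Reals, Hf. }
  destruct (Rlt_or_le 0 h) as [Hpos | Hneg].
  - rewrite Rabs_right in Hha by lra.
    destruct (Hmvt x0 (x0 + h)) as [c [Heq Hc]]; [lra|].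
    specialize (Hsg (c - x0)). rewrite Rabs_right in Hsg by lra.
    replace (x0 + (c - x0)) with c in Hsg by ring.
    specialize (Hsg ltac:(lra) ltac:(lra)). nra.
  - rewrite Rabs_left in Hha by lra.
    destruct (Hmvt (x0 + h) x0) as [c [Heq Hc]]; [lra|].
    specialize (Hsg (c - x0)). rewrite Rabs_left in Hsg by lra.
    replace (x0 + (c - x0)) with c in Hsg by ring.
    specialize (Hsg ltac:(lra) ltac:(lra)). nra.
Qed.

Definition graph_field (e : R) (dP : R -> R) (p : pt) : pt := (e, dP (fst p)).

(* Both invisibility conditions say P''(x) < 0, which makes the zero x a strict
   local maximum of P. *)
Lemma one_sided_min_not_singular (P dP : R -> R) x del : (forall y, is_derive P y (dP y)) ->
  ex_derive dP x -> P x = 0 -> 0 < del ->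
  (forall y, x - del <= y <= x -> 0 <= P y) \/ (forall y, x <= y <= x + del -> 0 <= P y) ->
  ~ singular_tangency (graph_field 1 dP) (graph_field (-1) dP) (x, 0).
Proof.
  intros HP Hd2 H0 Hdel Hside [[_ Htan] [[_ Hinv] _]].
  unfold Wf, W2f, graph_field in Htan, Hinv. simpl in Htan, Hinv.
  assert (Hd0 : dP x = 0) by nra.
  rewrite Hd0, Rmult_0_r, Rplus_0_r, Rmult_1_r in Hinv.
  destruct (strict_local_max P dP x (Derive dP x) HP (Derive_correct dP x Hd2) Hd0 Hinv)
    as [eta [Heta Hmax]].
  set (h := Rmin eta del / 2).
  assert (0 < Rmin eta del) by (now apply Rmin_glb_lt).
  pose proof (Rmin_l eta del). pose proof (Rmin_r eta del).
  destruct Hside as [Hleft | Hright].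
  - specialize (Hmax (- h)). rewrite Rabs_Ropp, Rabs_right in Hmax by (unfold h; lra).
    specialize (Hleft (x + - h)). unfold h in *.
    specialize (Hmax ltac:(lra) ltac:(lra)). specialize (Hleft ltac:(lra)). lra.
  - specialize (Hmax h). rewrite Rabs_right in Hmax by (unfold h; lra).
    specialize (Hright (x + h)). unfold h in *.
    specialize (Hmax ltac:(lra) ltac:(lra)). specialize (Hright ltac:(lra)). lra.
Qed.

Lemma solves_restrict W phi u v u' v' :
  solves W phi u v -> u <= u' -> v' <= v -> solves W phi u' v'.
Proof.
  intros [Hc Hd] Hu Hv. split.
  - intros t Ht eps Heps. destruct (Hc t ltac:(lra) eps Heps) as [d [Hd0 H]].
    exists d. split; [exact Hd0|]. intros s Hs. apply H. lra.
  - intros t Ht. apply Hd. lra.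
Qed.

Lemma solves_cont W phi u v t : solves W phi u v -> u <= t <= v ->
  cont_within (fun s => fst (phi s)) u v t /\ cont_within (fun s => snd (phi s)) u v t.
Proof.
  intros [Hc _] Ht. split; intros eps Heps; destruct (Hc t Ht eps Heps) as [d [Hd H]];
    exists d; split; auto; intros s Hs Hst; apply (H s Hs Hst).
Qed.

Lemma follow_X_restrict X phi u v u' v' : follow_X X phi u v -> u <= u' -> v' <= v ->
  follow_X X phi u' v'.
Proof.
  intros [Hs Hy] Hu Hv. split; [eapply solves_restrict; eauto | intros t Ht; apply Hy; lra].
Qed.

Lemma follow_Y_restrict Y phi u v u' v' : follow_Y Y phi u v -> u <= u' -> v' <= v ->
  follow_Y Y phi u' v'.
Proof.
  intros [Hs Hy] Hu Hv. split; [eapply solves_restrict; eauto | intros t Ht; apply Hy; lra].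
Qed.

Lemma local_traj_halves X Y phi a b : local_traj X Y phi a b ->
  ~ singular_tangency X Y (phi 0) -> follow_any X Y phi a 0 /\ follow_any X Y phi 0 b.
Proof.
  intros (Hab & Hup & Hdown & Hcp & Hcm & Hesc & Hsl & Hreg & _) Hns.
  destruct (Rtotal_order (snd (phi 0)) 0) as [Hy | [Hy | Hy]].
  - specialize (Hdown Hy). split; right; left; eapply follow_Y_restrict; eauto; lra.
  - assert (Htan : Wf X (phi 0) * Wf Y (phi 0) = 0 ->
                   follow_any X Y phi a 0 /\ follow_any X Y phi 0 b).
    { intros Hprod. apply Hreg. split; [split; assumption|].
      intros Hinv. apply Hns. split; [split|]; assumption. }
    unfold follow_any.
    destruct (Rtotal_order (Wf X (phi 0)) 0) as [Xn | [Xz | Xp]];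
    destruct (Rtotal_order (Wf Y (phi 0)) 0) as [Yn | [Yz | Yp]];
    try (apply Htan; first [rewrite Xz | rewrite Yz]; ring).
    + destruct (Hcm (conj Hy (conj Xn Yn))). tauto.
    + destruct (Hsl (conj Hy (conj Xn Yp))). tauto.
    + destruct (Hesc (conj Hy (conj Yn Xp))). tauto.
    + destruct (Hcp (conj Hy (conj Xp Yp))). tauto.
  - specialize (Hup Hy). split; left; eapply follow_X_restrict; eauto; lra.
Qed.

Lemma increasing_Z_le (tau : Z -> R) : (forall i, tau i < tau (i + 1)%Z) ->
  forall i j, (i <= j)%Z -> tau i <= tau j.
Proof.
  intros Hinc i. apply Z.le_ind.
  - intros j j' ->. reflexivity.
  - apply Rle_refl.
  - intros j _ IH. specialize (Hinc j). unfold Z.succ. lra.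
Qed.

(** * The phase invariant *)

Section PhaseInvariant.

Variables (P dP : R -> R) (s0 : R).
Hypothesis P_derive : forall x, is_derive P x (dP x).

Lemma solves_graph_field e phi u v : e * e = 1 -> solves (graph_field e dP) phi u v ->
  exists C C', forall t, u <= t <= v ->
    fst (phi t) = e * t + C /\ snd (phi t) = e * P (fst (phi t)) + C'.
Proof.
  intros Hee Hs. pose proof (proj2 Hs) as Hd.
  set (C := fst (phi u) - e * u).
  assert (Hx : forall t, u <= t <= v -> fst (phi t) = e * t + C).
  { intros t Ht.
    enough (fst (phi t) - e * t = fst (phi u) - e * u) by (unfold C; lra).
    apply (derive0_const (fun s => fst (phi s) - e * s) u v); [| |exact Ht].
    - intros s Hs'. apply cont_within_minus; [apply (solves_cont _ _ _ _ _ Hs Hs')|].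
      apply cont_within_continuity, (is_derive_continuity _ _ e). auto_derive; auto; ring.
    - intros s Hs'. replace 0 with (e - e) by ring.
      apply (is_derive_minus (fun s => fst (phi s)) (fun s => e * s)).
      + apply (Hd s Hs').
      + auto_derive; auto; ring. }
  set (C' := snd (phi u) - e * P (e * u + C)).
  exists C, C'. intros t Ht. split; [exact (Hx t Ht)|]. rewrite (Hx t Ht).
  enough (snd (phi t) - e * P (e * t + C) = snd (phi u) - e * P (e * u + C)) by (unfold C'; lra).
  assert (HPlin : forall s, is_derive (fun r => e * P (e * r + C)) s (e * (e * dP (e * s + C)))).
  { intros s. apply is_derive_scal.
    apply (is_derive_comp P (fun r => e * r + C)); [apply P_derive | auto_derive; auto; ring]. }
  apply (derive0_const (fun s => snd (phi s) - e * P (e * s + C)) u v); [| |exact Ht].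
  - intros s Hs'. apply cont_within_minus; [apply (solves_cont _ _ _ _ _ Hs Hs')|].
    apply cont_within_continuity, (is_derive_continuity _ _ _ (HPlin s)).
  - intros s Hs'. replace 0 with (dP (e * s + C) - e * (e * dP (e * s + C))).
    + apply (is_derive_minus (fun s => snd (phi s)) (fun s => e * P (e * s + C)));
        [|apply HPlin].
      rewrite <- (Hx s) by lra. apply (Hd s Hs').
    + rewrite <- Rmult_assoc, Hee. ring.
Qed.

Hypothesis P_zero_half_int : forall x, P x = 0 -> is_int (2 * (x + s0)).

Definition in_phase (phi : R -> pt) (a t : R) : Prop :=
  0 <= P (fst (phi t)) /\ exists e, (e = 1 \/ e = -1) /\
    snd (phi t) = e * P (fst (phi t)) /\ is_int (e * (fst (phi t) + s0) - t - a).

Definition phase_stable (phi : R -> pt) (u v : R) : Prop :=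
  forall a w, u <= w <= v -> in_phase phi a w -> forall t, u <= t <= v -> in_phase phi a t.

Lemma phase_stable_degenerate phi u v : v <= u -> phase_stable phi u v.
Proof. intros Hvu a w Hw Hph t Ht. now replace t with w by lra. Qed.

Lemma phase_stable_concat phi u m v : u <= m <= v ->
  phase_stable phi u m -> phase_stable phi m v -> phase_stable phi u v.
Proof.
  intros Hm H1 H2 a w Hw Hph.
  assert (Hphm : in_phase phi a m).
  { destruct (Rle_or_lt w m); [apply (H1 a w) | apply (H2 a w)]; auto; lra. }
  intros t Ht. destruct (Rle_or_lt t m); [apply (H1 a m) | apply (H2 a m)]; auto; lra.
Qed.

Lemma phase_stable_shift gamma c u v :
  phase_stable (fun s => gamma (s + c)) (u - c) (v - c) -> phase_stable gamma u v.
Proof.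
  assert (Hshift : forall a t,
             in_phase (fun s => gamma (s + c)) (a + c) (t - c) <-> in_phase gamma a t).
  { intros a t. unfold in_phase. replace (t - c + c) with t by ring.
    assert (Hz : forall z, z - (t - c) - (a + c) = z - t - a) by (intros; ring).
    setoid_rewrite Hz. reflexivity. }
  intros H a w Hw Hph t Ht. apply Hshift.
  apply (H (a + c) (w - c)); [lra | now apply Hshift | lra].
Qed.

Lemma in_phase_branch phi a w e : e = 1 \/ e = -1 -> in_phase phi a w ->
  0 <= e * snd (phi w) ->
  snd (phi w) = e * P (fst (phi w)) /\ is_int (e * (fst (phi w) + s0) - w - a).
Proof.
  intros He [Hn [e' [He' [Hy Hi]]]] Hsign.
  set (x := fst (phi w)) in *.
  destruct He as [-> | ->], He' as [-> | ->]; auto.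
  - assert (Hx : P x = 0) by nra. split; [lra|].
    replace (1 * (x + s0) - w - a) with (-1 * (x + s0) - w - a + 2 * (x + s0)) by ring.
    auto using is_int_add.
  - assert (Hx : P x = 0) by nra. split; [lra|].
    replace (-1 * (x + s0) - w - a) with (1 * (x + s0) - w - a - 2 * (x + s0)) by ring.
    auto using is_int_sub.
Qed.

Lemma graph_field_phase_stable e phi u v : e = 1 \/ e = -1 -> u < v ->
  solves (graph_field e dP) phi u v -> (forall t, u < t < v -> 0 < e * snd (phi t)) ->
  phase_stable phi u v.
Proof.
  intros He Huv Hs Hpos a w Hw Hph t Ht.
  assert (Hee : e * e = 1) by (destruct He as [-> | ->]; ring).
  destruct (solves_graph_field e phi u v Hee Hs) as [C [C' Hgraph]].
  assert (Hsign : forall s, u <= s <= v -> 0 <= e * snd (phi s)).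
  { intros s Hs'. apply (cont_within_interior_pos (fun r => e * snd (phi r)) u v); auto.
    apply cont_within_scal, (solves_cont _ _ _ _ _ Hs Hs'). }
  destruct (in_phase_branch phi a w e He Hph (Hsign w Hw)) as [Hyw Hiw].
  destruct (Hgraph w Hw) as [Hxw Hyw']. destruct (Hgraph t Ht) as [Hxt Hyt].
  assert (HC' : C' = 0) by lra. rewrite HC', Rplus_0_r in Hyt.
  split.
  - replace (P (fst (phi t))) with (e * snd (phi t)) by (rewrite Hyt, <- Rmult_assoc, Hee; ring).
    apply Hsign, Ht.
  - exists e. do 2 (split; [assumption|]).
    replace (e * (fst (phi t) + s0) - t - a) with (e * (fst (phi w) + s0) - w - a); [exact Hiw|].
    rewrite Hxt, Hxw. destruct He as [-> | ->]; ring.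
Qed.

Lemma follow_any_phase_stable phi u v :
  follow_any (graph_field 1 dP) (graph_field (-1) dP) phi u v -> phase_stable phi u v.
Proof.
  destruct (Rlt_or_le u v) as [Huv | Hvu]; [|intros; now apply phase_stable_degenerate].
  intros [[Hs Hy] | [[Hs Hy] | [_ [_ Hslide]]]].
  - apply (graph_field_phase_stable 1); auto. intros t Ht. specialize (Hy t Ht). lra.
  - apply (graph_field_phase_stable (-1)); auto. intros t Ht. specialize (Hy t Ht). lra.
  - exfalso. destruct (Hslide ((u + v) / 2)) as [[_ Hsl] | [_ Hsl]]; [lra | |];
      unfold Wf, graph_field in Hsl; simpl in Hsl; lra.
Qed.

Hypothesis P_zero_not_singular :
  forall x, P x = 0 -> ~ singular_tangency (graph_field 1 dP) (graph_field (-1) dP) (x, 0).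

Lemma local_traj_phase_stable phi a b :
  local_traj (graph_field 1 dP) (graph_field (-1) dP) phi a b -> phase_stable phi a b.
Proof.
  intros Hloc.
  destruct (classic (singular_tangency (graph_field 1 dP) (graph_field (-1) dP) (phi 0)))
    as [Hsing | Hns].
  - intros c w Hw [_ [e [He [Hy _]]]]. exfalso.
    destruct Hloc as (_ & _ & _ & _ & _ & _ & _ & _ & Hrest).
    rewrite (Hrest Hsing w Hw) in Hy.
    pose proof (proj1 (proj1 Hsing)) as Hsig. unfold onSigma in Hsig.
    apply (P_zero_not_singular (fst (phi 0))).
    + destruct He as [-> | ->]; lra.
    + replace (fst (phi 0), 0) with (phi 0) by (apply injective_projections; auto).
      exact Hsing.
  - destruct (local_traj_halves _ _ _ _ _ Hloc Hns) as [Hleft Hright].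
    apply (phase_stable_concat phi a 0 b); [apply (proj1 Hloc) | |];
      now apply follow_any_phase_stable.
Qed.

Lemma global_traj_in_phase gamma a :
  global_traj (graph_field 1 dP) (graph_field (-1) dP) gamma ->
  in_phase gamma a 0 -> forall t, in_phase gamma a t.
Proof.
  intros [tau [Hinc [Hup [Hlow Hpieces]]]] H0 t.
  assert (Hpiece : forall i, phase_stable gamma (tau i) (tau (i + 1)%Z)).
  { intros i. destruct (Hpieces i) as [c [_ Hloc]].
    apply (phase_stable_shift gamma c), local_traj_phase_stable, Hloc. }
  assert (Hspan : forall i j, (i <= j)%Z -> phase_stable gamma (tau i) (tau j)).
  { intros i. apply Z.le_ind.
    - intros j j' ->. reflexivity.
    - apply phase_stable_degenerate, Rle_refl.
    - intros j Hij IH. apply (phase_stable_concat _ _ (tau j)); auto.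
      split; [now apply increasing_Z_le | apply Rlt_le, Hinc]. }
  destruct (Hlow (Rmin 0 t)) as [i Hi]. destruct (Hup (Rmax 0 t)) as [j Hj].
  pose proof (Rmin_l 0 t). pose proof (Rmin_r 0 t).
  pose proof (Rmax_l 0 t). pose proof (Rmax_r 0 t).
  assert (Hij : (i <= j)%Z).
  { destruct (Z_le_gt_dec i j) as [|Hji]; [assumption|].
    pose proof (increasing_Z_le tau Hinc j i ltac:(lia)). lra. }
  apply (Hspan i j Hij a 0); auto; lra.
Qed.

Hypothesis P_grid_zero : forall x, 0 <= P x -> is_int (x + s0) -> P x = 0.

Definition grid_point (p : pt) : Prop := snd p = 0 /\ 0 <= P (fst p) /\ is_int (fst p + s0).

Lemma grid_point_iff phi a t : in_phase phi a t -> grid_point (phi t) <-> is_int (t + a).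
Proof.
  intros [Hn [e [He [Hy Hi]]]]. unfold grid_point. set (x := fst (phi t)) in *.
  split.
  - intros [_ [_ Hx]]. replace (t + a) with (e * (x + s0) - (e * (x + s0) - t - a)) by ring.
    auto using is_int_sub, is_int_sign_mul.
  - intros Hta.
    assert (Hx : is_int (x + s0)).
    { replace (x + s0) with (e * ((e * (x + s0) - t - a) + (t + a)))
        by (destruct He as [-> | ->]; ring).
      auto using is_int_sign_mul, is_int_add. }
    pose proof (P_grid_zero x Hn Hx). repeat split; auto. rewrite Hy. nra.
Qed.

Theorem grid_hit_unique (T : pt -> Prop) gamma : (forall p, T p <-> grid_point p) ->
  global_traj (graph_field 1 dP) (graph_field (-1) dP) gamma ->
  0 <= P (fst (gamma 0)) ->
  snd (gamma 0) = P (fst (gamma 0)) \/ snd (gamma 0) = - P (fst (gamma 0)) ->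
  forall t, exists! ts, t <= ts < t + 1 /\ T (gamma ts).
Proof.
  intros HT Hglob Hn Hstart t.
  assert (Hph0 : exists a, in_phase gamma a 0).
  { destruct Hstart as [Hy | Hy].
    - exists (fst (gamma 0) + s0). split; [exact Hn|]. exists 1.
      split; [now left|]. split; [lra|]. exists 0%Z. ring.
    - exists (- (fst (gamma 0) + s0)). split; [exact Hn|]. exists (-1).
      split; [now right|]. split; [lra|]. exists 0%Z. ring. }
  destruct Hph0 as [a Hph0].
  assert (Hiff : forall ts, T (gamma ts) <-> is_int (ts + a)).
  { intros ts. rewrite HT. apply grid_point_iff, (global_traj_in_phase gamma a Hglob Hph0). }
  destruct (unique_shifted_int t a) as [ts [[Hts Hint] Huniq]].
  exists ts. split; [split; [exact Hts | now apply Hiff]|].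
  intros ts' [Hts' HT']. apply Huniq. split; [exact Hts' | now apply Hiff].
Qed.

End PhaseInvariant.

(** * The systems Z_k *)

Definition twice_differentiable (f : R -> R) : Prop :=
  exists f1 f2 : R -> R, forall x, is_derive f x (f1 x) /\ is_derive f1 x (f2 x).

Lemma twice_differentiable_ext (f g : R -> R) : twice_differentiable f -> (forall x, f x = g x) ->
  twice_differentiable g.
Proof.
  intros [f1 [f2 H]] Hfg. exists f1, f2. intros x. destruct (H x) as [H1 H2].
  split; [eapply is_derive_ext; eauto | exact H2].
Qed.

Lemma twice_differentiable_const c : twice_differentiable (fun _ => c).
Proof. exists (fun _ => 0), (fun _ => 0). intros x. split; auto_derive; auto. Qed.

Lemma twice_differentiable_affine a c : twice_differentiable (fun x => a * x + c).
Proof. exists (fun _ => a), (fun _ => 0). intros x. split; auto_derive; auto; ring. Qed.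

Lemma twice_differentiable_mult (f g : R -> R) : twice_differentiable f -> twice_differentiable g ->
  twice_differentiable (fun x => f x * g x).
Proof.
  intros [f1 [f2 Hf]] [g1 [g2 Hg]].
  exists (fun x => f1 x * g x + f x * g1 x),
         (fun x => f2 x * g x + f1 x * g1 x + (f1 x * g1 x + f x * g2 x)).
  intros x. destruct (Hf x) as [F1 F2]. destruct (Hg x) as [G1 G2].
  assert (Hmult : forall (u u1 v v1 : R -> R), is_derive u x (u1 x) -> is_derive v x (v1 x) ->
            is_derive (fun y => u y * v y) x (u1 x * v x + u x * v1 x)).
  { intros u u1 v v1 Hu Hv. exact (is_derive_mult u v x _ _ Hu Hv Rmult_comm). }
  split; [now apply Hmult|].
  apply (is_derive_plus (fun y => f1 y * g y) (fun y => f y * g1 y)); now apply Hmult.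
Qed.

Lemma twice_differentiable_Derive (f : R -> R) : twice_differentiable f ->
  (forall x, is_derive f x (Derive f x)) /\ (forall x, ex_derive (Derive f) x).
Proof.
  intros [f1 [f2 H]].
  assert (HD : forall x, Derive f x = f1 x) by (intros x; apply is_derive_unique, H).
  split; intros x.
  - rewrite HD. apply H.
  - exists (f2 x). apply (is_derive_ext f1); [intros; now rewrite HD | apply H].
Qed.

Lemma twice_differentiable_sq_shift c : twice_differentiable (fun x => (x - c) ^ 2).
Proof.
  apply (twice_differentiable_ext (fun x => (1 * x + - c) * (1 * x + - c))).
  - apply twice_differentiable_mult; apply twice_differentiable_affine.
  - intros x. ring.
Qed.

Lemma prodsq_twice_differentiable k n : twice_differentiable (prodsq k n).
Proof.
  induction n as [|n IH]; [apply twice_differentiable_const|].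
  exact (twice_differentiable_mult _ _ IH (twice_differentiable_sq_shift _)).
Qed.

Lemma Pk_twice_differentiable k : twice_differentiable (Pk k).
Proof.
  apply twice_differentiable_mult; [|apply prodsq_twice_differentiable].
  apply (twice_differentiable_ext
           (fun x => (-1 * x + - ((INR k - 1) / 2)) * (1 * x + - ((INR k - 1) / 2)))).
  - apply twice_differentiable_mult; apply twice_differentiable_affine.
  - intros x. ring.
Qed.

Lemma prodsq_nonneg k n x : 0 <= prodsq k n x.
Proof.
  induction n as [|n IH]; simpl; [lra|].
  apply Rmult_le_pos; [exact IH | apply pow2_ge_0].
Qed.

Lemma prodsq_eq0 k n x : prodsq k n x = 0 -> exists i, (1 <= i <= n)%nat /\ x = pj k i.
Proof.
  induction n as [|n IH]; simpl; intros H; [lra|].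
  destruct (Rmult_integral _ _ H) as [H0 | H0].
  - destruct (IH H0) as [i [Hi Hx]]. exists i. split; [lia | exact Hx].
  - exists (S n). split; [lia|]. unfold pj.
    destruct (Req_dec x (INR (S n) - INR k / 2)) as [|Hne]; [assumption|].
    exfalso. apply (pow_nonzero _ 2 (Rminus_eq_contra _ _ Hne) H0).
Qed.

Lemma prodsq_pj k n j : (1 <= j <= n)%nat -> prodsq k n (pj k j) = 0.
Proof.
  induction n as [|n IH]; intros Hj; [lia|]. cbn [prodsq].
  destruct (Nat.eq_dec j (S n)) as [-> | Hne].
  - unfold pj. ring.
  - rewrite IH by lia. ring.
Qed.

Lemma pj_bounds k j : (1 <= j <= k - 1)%nat -> r0 k + 1 / 2 <= pj k j <= r1 k - 1 / 2.
Proof.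
  intros Hj. pose proof (le_INR 1 j ltac:(lia)). pose proof (le_INR (j + 1) k ltac:(lia)).
  rewrite plus_INR in *. unfold r0, r1, pj. simpl in *. lra.
Qed.

Lemma Pk_nonneg k x : r0 k <= x <= r1 k -> 0 <= Pk k x.
Proof.
  unfold r0, r1, Pk. intros Hx. apply Rmult_le_pos; [nra | apply prodsq_nonneg].
Qed.

Lemma Pk_nonneg_range k x : (1 <= k)%nat -> 0 <= Pk k x -> r0 k <= x <= r1 k.
Proof.
  intros Hk Hn. pose proof (le_INR 1 k Hk) as Hk1. simpl in Hk1.
  destruct (classic (r0 k <= x <= r1 k)) as [|Hout]; [assumption|]. exfalso.
  assert (Hquad : 0 < (x + (INR k - 1) / 2) * (x - (INR k - 1) / 2)).
  { unfold r0, r1 in Hout. destruct (Rlt_or_le x ((1 - INR k) / 2)); nra. }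
  assert (Hzero : prodsq k (k - 1) x = 0).
  { unfold Pk in Hn. pose proof (prodsq_nonneg k (k - 1) x). nra. }
  destruct (prodsq_eq0 _ _ _ Hzero) as [j [Hj ->]].
  apply Hout. pose proof (pj_bounds k j Hj). lra.
Qed.

Lemma Pk_eq0 k x : Pk k x = 0 ->
  x = r0 k \/ x = r1 k \/ exists j, (1 <= j <= k - 1)%nat /\ x = pj k j.
Proof.
  unfold Pk, r0, r1. intros H.
  destruct (Rmult_integral _ _ H) as [Hq | Hp].
  - assert (Hq' : (x + (INR k - 1) / 2) * (x - (INR k - 1) / 2) = 0) by lra.
    destruct (Rmult_integral _ _ Hq'); [left | right; left]; lra.
  - right; right. now apply prodsq_eq0.
Qed.

Lemma Pk_pj k j : (1 <= j <= k - 1)%nat -> Pk k (pj k j) = 0.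
Proof. intros Hj. unfold Pk. rewrite prodsq_pj by exact Hj. ring. Qed.

Lemma Pk_zero_half_int k x : Pk k x = 0 -> is_int (2 * (x + INR k / 2)).
Proof.
  intros H. destruct (Pk_eq0 k x H) as [-> | [-> | [j [_ ->]]]]; unfold r0, r1, pj.
  - exists 1%Z. field.
  - exists (2 * Z.of_nat k - 1)%Z. rewrite minus_IZR, mult_IZR, <- INR_IZR_INZ. simpl. field.
  - exists (2 * Z.of_nat j)%Z. rewrite mult_IZR, <- INR_IZR_INZ. simpl. field.
Qed.

Lemma Pk_zero_not_singular k x : (2 <= k)%nat -> Pk k x = 0 ->
  ~ singular_tangency (Xk k) (Yk k) (x, 0).
Proof.
  intros Hk H0. pose proof (le_INR 2 k Hk) as Hk2. simpl in Hk2.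
  destruct (twice_differentiable_Derive _ (Pk_twice_differentiable k)) as [HP HP2].
  apply (one_sided_min_not_singular (Pk k) (Derive (Pk k)) x (1 / 2)); auto; [lra|].
  destruct (Pk_eq0 k x H0) as [-> | [-> | [j [Hj ->]]]]; [right | left | left];
    intros y Hy; apply Pk_nonneg; unfold r0, r1 in *; try lra.
  pose proof (pj_bounds k j Hj). unfold r0, r1 in *. lra.
Qed.

Lemma Pk_grid k x : (1 <= k)%nat ->
  (0 <= Pk k x /\ is_int (x + INR k / 2)) <-> exists j, (1 <= j <= k - 1)%nat /\ x = pj k j.
Proof.
  intros Hk. split.
  - intros [Hn [m Hm]]. pose proof (Pk_nonneg_range k x Hk Hn) as Hx. unfold r0, r1 in Hx.
    assert (Hm1 : (0 < m)%Z) by (apply lt_IZR; simpl; lra).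
    assert (Hmk : (m < Z.of_nat k)%Z) by (apply lt_IZR; rewrite <- INR_IZR_INZ; lra).
    exists (Z.to_nat m). split; [lia|].
    unfold pj. rewrite INR_IZR_INZ, Z2Nat.id by lia. lra.
  - intros [j [Hj ->]]. split; [rewrite Pk_pj by exact Hj; lra|].
    unfold pj. replace (INR j - INR k / 2 + INR k / 2) with (INR j) by ring. apply is_int_INR.
Qed.

Theorem Zk_tangency_time_unique (k : nat) : (2 <= k)%nat ->
  forall gamma : R -> pt, global_traj (Xk k) (Yk k) gamma -> Lambdak k (gamma 0) ->
  forall t : R, exists! ts : R, t <= ts < t + 1 /\
    exists j : nat, (1 <= j <= k - 1)%nat /\ gamma ts = (pj k j, 0).
Proof.
  intros Hk gamma Hglob [x [Hx Hstart]].
  destruct (twice_differentiable_Derive _ (Pk_twice_differentiable k)) as [HP _].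
  apply (grid_hit_unique (Pk k) (Derive (Pk k)) (INR k / 2) HP)
    with (T := fun p => exists j, (1 <= j <= k - 1)%nat /\ p = (pj k j, 0)); auto.
  - apply Pk_zero_half_int.
  - intros y Hy. now apply Pk_zero_not_singular.
  - intros y Hn Hint. destruct (proj1 (Pk_grid k y ltac:(lia)) (conj Hn Hint)) as [j [Hj ->]].
    now apply Pk_pj.
  - intros [y z]. unfold grid_point. simpl. split.
    + intros [j [Hj Heq]]. apply pair_equal_spec in Heq as [-> ->].
      split; [reflexivity|]. apply Pk_grid; [lia | eauto].
    + intros [-> Hgrid]. apply Pk_grid in Hgrid as [j [Hj ->]]; [eauto | lia].
  - destruct Hstart as [-> | ->]; simpl; apply Pk_nonneg, Hx.
  - destruct Hstart as [-> | ->]; simpl; auto.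
Qed.

(** * The system Z_infinity *)

Lemma Pinf_derive x : is_derive Pinf x (2 * sin (2 * PI * x)).
Proof. unfold Pinf. pose proof PI_RGT_0. auto_derive; [auto | field; lra]. Qed.

Lemma Pinf_nonneg x : 0 <= Pinf x.
Proof.
  unfold Pinf. pose proof PI_RGT_0. pose proof (COS_bound (2 * PI * x)).
  apply Rdiv_le_0_compat; lra.
Qed.

Lemma Pinf_eq0_sin x : Pinf x = 0 -> sin (2 * PI * x) = 0.
Proof.
  unfold Pinf. intros H. pose proof PI_RGT_0.
  assert (Hcos : cos (2 * PI * x) = 1).
  { apply Rmult_eq_compat_r with (r := PI) in H. field_simplify in H; lra. }
  pose proof (sin2_cos2 (2 * PI * x)). unfold Rsqr in *. nra.
Qed.

Lemma Pinf_zero_half_int x : Pinf x = 0 -> is_int (2 * (x + 0)).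
Proof.
  intros H. destruct (sin_eq_0_0 _ (Pinf_eq0_sin x H)) as [m Hm].
  exists m. pose proof PI_RGT_0. apply (Rmult_eq_reg_r PI); [|lra]. lra.
Qed.

Lemma Pinf_IZR m : Pinf (IZR m) = 0.
Proof.
  unfold Pinf. replace (2 * PI * IZR m) with (2 * (IZR m * PI)) by ring.
  rewrite cos_2a_sin, sin_eq_0_1 by (now exists m). field. apply PI_neq0.
Qed.

Theorem Zinf_tangency_time_unique (gamma : R -> pt) :
  global_traj Xinf Yinf gamma -> Lambdainf (gamma 0) ->
  forall t : R, exists! ts : R, t <= ts < t + 1 /\ exists j : Z, gamma ts = (IZR j, 0).
Proof.
  intros Hglob [x Hstart].
  apply (grid_hit_unique Pinf (fun y => 2 * sin (2 * PI * y)) 0 Pinf_derive)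
    with (T := fun p => exists j, p = (IZR j, 0)); auto.
  - exact Pinf_zero_half_int.
  - intros y Hy. apply (one_sided_min_not_singular Pinf _ y 1 Pinf_derive); auto; [|lra|].
    + auto_derive. auto.
    + left. intros; apply Pinf_nonneg.
  - intros y _ [m Hm]. rewrite Rplus_0_r in Hm. rewrite Hm. apply Pinf_IZR.
  - intros [y z]. unfold grid_point. simpl. split.
    + intros [j Heq]. apply pair_equal_spec in Heq as [-> ->].
      repeat split; [apply Pinf_nonneg | exists j; ring].
    + intros [-> [_ [m Hm]]]. exists m. f_equal. lra.
  - apply Pinf_nonneg.
  - destruct Hstart as [-> | ->]; simpl; auto.
Qed.

Theorem mainTheorem11 :
  (forall (k : nat), (2 <= k)%nat ->
    forall gamma : R -> pt,
      global_traj (Xk k) (Yk k) gamma -> Lambdak k (gamma 0) ->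
      forall t : R, exists! ts : R, t <= ts < t + 1 /\
        exists j : nat, (1 <= j <= k - 1)%nat /\ gamma ts = (pj k j, 0))
  /\
  (forall gamma : R -> pt,
      global_traj Xinf Yinf gamma -> Lambdainf (gamma 0) ->
      forall t : R, exists! ts : R, t <= ts < t + 1 /\
        exists j : Z, gamma ts = (IZR j, 0)).
Proof. exact (conj Zk_tangency_time_unique Zinf_tangency_time_unique). Qed.
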